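(* Let $P$ and $Q$ be locally finite posets and let $f:P\to Q$, $g:Q\to P$ be order-preserving maps forming a Galois connection $f\dashv g$, i.e. $f(x)\le_Q y \iff x\le_P g(y)$ for all $x\in P$, $y\in Q$. Extend $f$ linearly to a map $\mathbf{k}P\to\mathbf{k}Q$. For $x\in P$ and $a\in Q$ let $\omega_x^P=\sum_{x\le_P y}\mu_P(x,y)\,y$ and $\omega_a^Q=\sum_{a\le_Q b}\mu_Q(a,b)\,b$. Then for every $x\in P$, \[ f(\omega_x^P)=\sum_{a\in Q\,:\,g(a)=x}\omega_a^Q. \]
   Context: $\mathbf{k}$ is a field of characteristic $0$. For a poset $P$, $\mathbf{k}P$ denotes the vector space with basis the elements of $P$ (the linearization of $P$). $\mu_P$ denotes the Möbius function of $P$: $\mu_P(x,x)=1$ and $\mu_P(x,y)=-\sum_{x\le z<y}\mu_P(x,z)$ for $x<y$ (and $0$ if $x\not\le y$). The elements $\omega_x^P$ are called the inverted basis of $\mathbf{k}P$. (Sums are assumed to make sense, e.g. for the relevant posets finite.) *)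

From HB Require Import structures.
From mathcomp Require Import all_boot all_order all_algebra.
Set Implicit Arguments. Unset Strict Implicit. Unset Printing Implicit Defensive.
Import Order.TTheory GRing.Theory.
Local Open Scope ring_scope.

(* Linearization kP of a finite poset P: formal k-linear combinations of the
   elements of P, represented by their coefficient function {ffun P -> k^o}. *)
Section Linearization.
Variable k : fieldType.

Definition basisv (P : finType) (x : P) : {ffun P -> k^o} :=
  [ffun y => if y == x then 1 else 0].

Definition linext (P Q : finType) (f : P -> Q) (v : {ffun P -> k^o}) : {ffun Q -> k^o} :=
  \sum_(x : P) v x *: basisv (f x).

(* Möbius function, by the recursion mu(x,x)=1,
   mu(x,y) = - sum_{x <= z < y} mu(x,z) for x < y, and 0 if not x <= y.
   Fuel #|P| suffices since every chain has at most #|P| elements. *)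
Fixpoint mobius_aux (d : Order.disp_t) (P : finPOrderType d) (n : nat) (x y : P) : k :=
  match n with
  | 0 => 0
  | n'.+1 =>
      if x == y then 1
      else if (x <= y)%O then
        - \sum_(z : P | (x <= z)%O && (z < y)%O) mobius_aux n' x z
      else 0
  end.

Definition mobius (d : Order.disp_t) (P : finPOrderType d) (x y : P) : k :=
  mobius_aux #|P| x y.

Definition omega (d : Order.disp_t) (P : finPOrderType d) (x : P) : {ffun P -> k^o} :=
  \sum_(y : P | (x <= y)%O) mobius x y *: basisv y.

End Linearization.

(* Both sides of the identity are determined by their sums over the down-sets
   {b <= c} of Q, since such down-sums determine a function by induction on c.
   Summing omega_x^P over a down-set {y <= p} gives [x = p] (this is the
   defining recursion of the Moebius function), so the down-sum of
   f(omega_x^P) at c is the sum of omega_x^P over {y : f y <= c} = {y <= g c},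
   i.e. [x = g c].  The down-sum of the right-hand side at c is
   sum_{g a = x} [a = c] = [g c = x] as well. *)
From HB Require Import structures.
From mathcomp Require Import all_boot all_order all_algebra.

Set Implicit Arguments.
Unset Strict Implicit.
Unset Printing Implicit Defensive.

Import Order.TTheory GRing.Theory.
Local Open Scope ring_scope.

Section Linearization.
Variable k : fieldType.

Lemma scale_basisvE (T : finType) (a : k) (x y : T) :
  (a *: @basisv k T x) y = if y == x then a else 0.
Proof. by rewrite !ffunE; case: eqP; rewrite ?scaler0 // => _; apply: mulr1. Qed.

Lemma linextE (T U : finType) (f : T -> U) (v : {ffun T -> k^o}) (b : U) :
  linext f v b = \sum_(y | f y == b) v y.
Proof.
rewrite /linext sum_ffunE [RHS]big_mkcond; apply: eq_bigr => y _.
by rewrite scale_basisvE eq_sym.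
Qed.

Lemma sum_linext (T U : finType) (f : T -> U) (v : {ffun T -> k^o}) (A : pred U) :
  \sum_(b | A b) linext f v b = \sum_(y | A (f y)) v y.
Proof.
rewrite [RHS](partition_big f A) //=; apply: eq_bigr => b Ab; rewrite linextE.
by apply: eq_bigl => y; case: eqP => [->|]; rewrite ?Ab ?andbF.
Qed.

End Linearization.

Section Mobius.
Variables (k : fieldType) (d : Order.disp_t) (P : finPOrderType d).
Implicit Types x y z : P.

Definition below y := [set z | (z < y)%O].

Lemma card_below_lt z y : (z < y)%O -> (#|below z| < #|below y|)%N.
Proof.
move=> zy; apply: proper_card; apply/properP; split.
  by apply/subsetP => w; rewrite !inE => /lt_trans; apply.
by exists z; rewrite !inE ?zy ?ltxx.
Qed.

Lemma card_below_ltT y : (#|below y| < #|P|)%N.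
Proof.
apply: proper_card; apply/properP; split; first exact/subsetP.
by exists y; rewrite ?inE ?ltxx.
Qed.

(* The fuel of [mobius_aux] is irrelevant once it exceeds the number of
   elements below [y], since each recursive call strictly decreases it. *)
Lemma mobius_aux_fuel n m x y :
  (#|below y| < n)%N -> (#|below y| < m)%N ->
  @mobius_aux k d P n x y = mobius_aux k m x y.
Proof.
elim: n m x y => [|n IHn] [|m] x y //=; rewrite !ltnS => yn ym.
case: eqP => // _; case: ifP => // _; congr (- _).
apply: eq_bigr => z /andP[_ zy]; have zlty := card_below_lt zy.
by apply: IHn; apply: leq_trans zlty _.
Qed.

Lemma mobiusxx x : @mobius k d P x x = 1.
Proof.
by rewrite /mobius; case: #|P| (card_below_ltT x) => //= n _; rewrite eqxx.
Qed.

Lemma mobius_lt x y : (x < y)%O ->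
  @mobius k d P x y = - \sum_(z | (x <= z)%O && (z < y)%O) mobius k x z.
Proof.
move=> xy; rewrite /mobius; case E: #|P| (card_below_ltT y) => [|n] // yn.
rewrite [LHS]/= (lt_eqF xy) (ltW xy); congr (- _); apply: eq_bigr => z /andP[_ zy].
have zn := leq_trans (card_below_lt zy) yn.
by apply: mobius_aux_fuel => //; apply: ltnW.
Qed.

Lemma sum_mobius_interval x z : (x <= z)%O ->
  \sum_(y | (x <= y)%O && (y <= z)%O) @mobius k d P x y = (x == z)%:R.
Proof.
case: (eqVneq x z) => [<- _|xz_neq xz].
  by rewrite (big_pred1 x) ?mobiusxx // => y; rewrite -eq_le eq_sym.
rewrite (bigD1 z) /= ?xz ?lexx // mobius_lt ?lt_neqAle ?xz_neq //.
rewrite addrC (eq_bigl (fun y => (x <= y)%O && (y < z)%O)) ?subrr // => y.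
by rewrite lt_neqAle -andbA [(y != z) && _]andbC.
Qed.

Lemma omegaE x y : @omega k d P x y = if (x <= y)%O then mobius k x y else 0.
Proof.
rewrite /omega sum_ffunE.
under eq_bigr do rewrite scale_basisvE.
rewrite -big_mkcondr.
case: ifP => xy.
  by rewrite (big_pred1 y) // => z /=; rewrite eq_sym andbC; case: eqP => // ->.
by rewrite big1 // => z /andP[xz /eqP yz]; rewrite yz xz in xy.
Qed.

Lemma sum_omega_le x c :
  \sum_(b | (b <= c)%O) @omega k d P x b = (x == c)%:R.
Proof.
under eq_bigr do rewrite omegaE.
rewrite -big_mkcondr /=; have [xc|xNc] := boolP (x <= c)%O.
  by rewrite -sum_mobius_interval //; apply: eq_bigl => y; rewrite andbC.
rewrite big_pred0; first by case: eqP xNc => // ->; rewrite lexx.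
by move=> y; apply/andP => -[yc xy]; rewrite (le_trans xy yc) in xNc.
Qed.

Lemma down_sum_inj (V : zmodType) (F G : P -> V) :
  (forall c, \sum_(b | (b <= c)%O) F b = \sum_(b | (b <= c)%O) G b) ->
  F =1 G.
Proof.
move=> eqFG c; move: {2}#|below c| (leqnn #|below c|) => n.
elim/ltn_ind: n c => n IHn c cn; have := eqFG c.
rewrite (bigD1 c) // [X in _ = X](bigD1 c) //=.
have -> : \sum_(b | (b <= c)%O && (b != c)) F b
        = \sum_(b | (b <= c)%O && (b != c)) G b.
  apply: eq_bigr => b /andP[bc bNc]; apply: (IHn #|below b|) => //.
  by apply: leq_trans cn; apply: card_below_lt; rewrite lt_neqAle bNc.
exact: addIr.
Qed.

End Mobius.

Theorem mainTheorem1 (k : fieldType) (hk : [pchar k] =i pred0)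
  (dP dQ : Order.disp_t) (P : finPOrderType dP) (Q : finPOrderType dQ)
  (f : P -> Q) (g : Q -> P)
  (hf : {homo f : x y / (x <= y)%O})
  (hg : {homo g : x y / (x <= y)%O})
  (hgal : forall (x : P) (y : Q), (f x <= y)%O = (x <= g y)%O)
  (x : P) :
  @linext k P Q f (@omega k dP P x) = \sum_(a : Q | g a == x) @omega k dQ Q a.
Proof.
apply/ffunP; apply: down_sum_inj => c.
rewrite sum_linext (eq_bigl (fun y => (y <= g c)%O)) => [|y]; last exact: hgal.
rewrite sum_omega_le.
under eq_bigr do rewrite sum_ffunE.
rewrite exchange_big /=.
under eq_bigr do rewrite sum_omega_le.
rewrite big_mkcond (bigD1 c) //= big1 ?addr0 => [|a /negbTE ->]; last by case: ifP.
by rewrite eqxx eq_sym; case: eqP.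
Qed.
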